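(* Consider problem $\mathbf{P4}$ (defined in the context) with $E_{max}>0$. Let $A_1=\sum_{i=1}^M\gamma_i$, $A_2=\sum_{j=1}^N\theta_j$, $a=\sum_{i=1}^M\eta_iP_Bh_{1,i}$, $f(x)=x\ln x-x+1$, let $x^*>1$ solve $f(x^* )=A_1$ and, when $A_1\ge \frac{a}{N}A_2$, let $x_1^*>1$ solve $f(x_1^* )=A_1-\frac aNA_2$. Write $L=\frac{a(x_1^*-1)}{A_1+x_1^*-1}$, $U=\frac{N}{A_2}(x_1^*-1)$, $D=N(x_1^*-1+A_1)-aA_2$. Then an optimal solution of $\mathbf{P4}$ is, for $i=1,\dots,M$, $j=1,\dots,N$: (i) if $A_1\ge\frac aNA_2$ and $E_{max}\le L$: $\tau_0^*=\min\left[\frac{x^*-1}{A_1+x^*-1},\frac{E_{max}}{a}\right]$, $\tau_{1,i}^*=\max\left[\frac{\gamma_i}{A_1+x^*-1},\frac{\gamma_i}{A_1}\left(1-\frac{E_{max}}{a}\right)\right]$, $\tau_{2,j}^*=0$, $\bar E^*=0$; (ii) if $A_1\ge\frac aNA_2$ and $L\le E_{max}\le U$: $\tau_0^*=\frac{N(x_1^*-1)-E_{max}A_2}{D}$, $\tau_{1,i}^*=\frac{\gamma_i\left(N(x_1^*-1)-E_{max}A_2\right)}{(x_1^*-1)D}$, $\tau_{2,j}^*=\frac{\theta_j\left(E_{max}(x_1^*-1+A_1)-a(x_1^*-1)\right)}{(x_1^*-1)D}$, $\bar E^*=\frac{E_{max}(x_1^*-1+A_1)-a(x_1^*-1)}{D}$;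 (iii) if ($A_1\ge\frac aNA_2$ and $E_{max}\ge U$) or $A_1<\frac aNA_2$: $\tau_0^*=0$, $\tau_{1,i}^*=0$, $\tau_{2,j}^*=\theta_j/A_2$, $\bar E^*=E_{max}/N$.
   Context: Integers $M,N\ge 1$; positive constants $P_B$, $\Gamma$, $\sigma^2$, $E_{max}$; for $i=1,\dots,M$ constants $\eta_i\in(0,1)$, $h_{1,i}>0$, $g_{1,i}>0$; for $j=1,\dots,N$ constants $g_{2,j}>0$. Define $\gamma_i=\eta_ih_{1,i}g_{1,i}P_B/(\Gamma\sigma^2)$ and $\theta_j=g_{2,j}/(\Gamma\sigma^2)$. For $\tau>0$ let $R_{1,i}(\tau_0,\tau)=\tau\log_2(1+\gamma_i\tau_0/\tau)$ and $R_{2,j}(\bar E,\tau)=\tau\log_2(1+\theta_j\bar E/\tau)$, with both set to $0$ when $\tau=0$. Problem $\mathbf{P4}$: maximize $\sum_{i=1}^MR_{1,i}(\tau_0,\tau_{1,i})+\sum_{j=1}^NR_{2,j}(\bar E,\tau_{2,j})$ over $\tau_0,\tau_{1,1},\dots,\tau_{1,M},\tau_{2,1},\dots,\tau_{2,N}\ge0$ and $\bar E\ge 0$, subject to $\tau_0+\sum_{i=1}^M\tau_{1,i}+\sum_{j=1}^N\tau_{2,j}\le 1$ and $a\tau_0+N\bar E\le E_{max}$, where $a=\sum_{i=1}^M\eta_iP_Bh_{1,i}$. *)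

From Stdlib Require Import Reals Lra.
Open Scope R_scope.

(* sum_{k=0}^{n-1} f k  (indices shifted: paper's i=1..M is k=0..M-1) *)
Fixpoint rsum (n : nat) (f : nat -> R) : R :=
  match n with
  | O => 0
  | S n' => rsum n' f + f n'
  end.

Definition log2 (x : R) : R := ln x / ln 2.

Definition rate (c y tau : R) : R :=
  if Req_EM_T tau 0 then 0 else tau * log2 (1 + c * y / tau).

Definition gam (PB Gam s2 : R) (eta h1 g1 : nat -> R) (i : nat) : R :=
  eta i * h1 i * g1 i * PB / (Gam * s2).

Definition theta (Gam s2 : R) (g2 : nat -> R) (j : nat) : R :=
  g2 j / (Gam * s2).

Definition acoef (M : nat) (PB : R) (eta h1 : nat -> R) : R :=
  rsum M (fun i => eta i * PB * h1 i).

Definition P4obj (M N : nat) (PB Gam s2 : R) (eta h1 g1 g2 : nat -> R)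
  (t0 : R) (t1 t2 : nat -> R) (E : R) : R :=
  rsum M (fun i => rate (gam PB Gam s2 eta h1 g1 i) t0 (t1 i))
  + rsum N (fun j => rate (theta Gam s2 g2 j) E (t2 j)).

Definition P4feas (M N : nat) (PB Emax : R) (eta h1 : nat -> R)
  (t0 : R) (t1 t2 : nat -> R) (E : R) : Prop :=
  0 <= t0 /\ (forall i, (i < M)%nat -> 0 <= t1 i)
  /\ (forall j, (j < N)%nat -> 0 <= t2 j) /\ 0 <= E
  /\ t0 + rsum M t1 + rsum N t2 <= 1
  /\ acoef M PB eta h1 * t0 + INR N * E <= Emax.

Definition P4opt (M N : nat) (PB Gam s2 Emax : R) (eta h1 g1 g2 : nat -> R)
  (t0 : R) (t1 t2 : nat -> R) (E : R) : Prop :=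
  P4feas M N PB Emax eta h1 t0 t1 t2 E /\
  forall t0' t1' t2' E', P4feas M N PB Emax eta h1 t0' t1' t2' E' ->
    P4obj M N PB Gam s2 eta h1 g1 g2 t0' t1' t2' E'
    <= P4obj M N PB Gam s2 eta h1 g1 g2 t0 t1 t2 E.

Definition fx (x : R) : R := x * ln x - x + 1.

From Stdlib Require Import Reals Lra Lia.
Open Scope R_scope.

(* Every rate is the perspective [t log2 (1 + c y / t)] of a concave function, so it
   lies below its tangent plane along any ray [c y = (x - 1) t], whose slopes are
   [fx x / x] in [t] and [c / x] in [y].  Pricing time at [fx x / x] and energy at
   [nu / x], the tangent bounds add up to [(fx x + nu Emax) / (x ln 2)] for every
   feasible point, provided [A1 - a nu <= fx x] and [A2 <= N nu] (weak duality).
   Each announced point puts every user on such a ray,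
   [tau_0 = k1 (x - 1)], [tau_1i = gamma_i k1], [E = k2 (x - 1)], [tau_2j = theta_j k2],
   and attains the bound for [x = 1 + A1 Emax / (a - Emax)] in case (i), [x = x1*] in
   case (ii) and [x = 1 + A2 Emax / N] in case (iii); which certificate is dual
   feasible is decided by comparing [fx x] with [A1 - a A2 / N], using that [fx] is
   increasing on [[1, +oo)]. *)

Lemma Rdiv_le_0_compat x y : 0 <= x -> 0 < y -> 0 <= x / y.
Proof. intros. unfold Rdiv. apply Rmult_le_pos; [|left; apply Rinv_0_lt_compat]; assumption. Qed.

Lemma rsum_ext n f g : (forall i, (i < n)%nat -> f i = g i) -> rsum n f = rsum n g.
Proof.
  induction n as [|n IH]; intros H; simpl; [reflexivity|].
  rewrite IH by (intros; apply H; lia). rewrite H by lia. reflexivity.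
Qed.

Lemma rsum_le n f g : (forall i, (i < n)%nat -> f i <= g i) -> rsum n f <= rsum n g.
Proof.
  induction n as [|n IH]; intros H; simpl; [lra|].
  apply Rplus_le_compat; [apply IH; intros; apply H; lia | apply H; lia].
Qed.

Lemma rsum_plus n f g : rsum n (fun i => f i + g i) = rsum n f + rsum n g.
Proof. induction n as [|n IH]; simpl; [ring|]. rewrite IH; ring. Qed.

Lemma rsum_scal n k f : rsum n (fun i => f i * k) = rsum n f * k.
Proof. induction n as [|n IH]; simpl; [ring|]. rewrite IH; ring. Qed.

Lemma rsum_0 n : rsum n (fun _ => 0) = 0.
Proof. induction n as [|n IH]; simpl; [reflexivity|]. rewrite IH; ring. Qed.

Lemma rsum_nonneg n f : (forall i, (i < n)%nat -> 0 <= f i) -> 0 <= rsum n f.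
Proof. intros H. rewrite <- (rsum_0 n). now apply rsum_le. Qed.

Lemma rsum_pos n f : (1 <= n)%nat -> (forall i, (i < n)%nat -> 0 < f i) -> 0 < rsum n f.
Proof.
  destruct n as [|n]; [lia|]. intros _ H; simpl.
  assert (0 <= rsum n f) by (apply rsum_nonneg; intros; left; apply H; lia).
  specialize (H n ltac:(lia)). lra.
Qed.

Lemma ln_le_tangent x y : 0 < x -> 0 < y -> ln x <= ln y + (x - y) / y.
Proof.
  intros Hx Hy.
  pose proof (exp_ineq1_le (ln x - ln y)) as H.
  replace (exp (ln x - ln y)) with (x / y) in H
    by (unfold Rminus, Rdiv; rewrite exp_plus, exp_Ropp, !exp_ln; auto).
  replace ((x - y) / y) with (x / y - 1) by (field; lra). lra.
Qed.

Lemma ln_nonneg x : 1 <= x -> 0 <= ln x.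
Proof.
  intros [H|<-]; [|rewrite ln_1; lra].
  left. rewrite <- ln_1. apply ln_increasing; lra.
Qed.

Lemma fx_tangent u v : 0 < u -> 0 < v -> fx u + (v - u) * ln u <= fx v.
Proof.
  intros Hu Hv. unfold fx.
  assert (H : v * ln u <= v * (ln v + (u - v) / v))
    by (apply Rmult_le_compat_l; [lra | apply ln_le_tangent; assumption]).
  replace (v * (ln v + (u - v) / v)) with (v * ln v + u - v) in H by (field; lra).
  lra.
Qed.

Lemma fx_nonneg x : 0 < x -> 0 <= fx x.
Proof.
  intros Hx. pose proof (fx_tangent 1 x ltac:(lra) Hx) as H.
  unfold fx at 1 in H. rewrite ln_1 in H. lra.
Qed.

Lemma fx_le_increasing u v : 1 <= u -> u <= v -> fx u <= fx v.
Proof.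
  intros Hu Huv. pose proof (fx_tangent u v ltac:(lra) ltac:(lra)).
  pose proof (ln_nonneg u Hu). nra.
Qed.

Lemma fx_lt_increasing u v : 1 < u -> u < v -> fx u < fx v.
Proof.
  intros Hu Huv. pose proof (fx_tangent u v ltac:(lra) ltac:(lra)).
  assert (0 < ln u) by (rewrite <- ln_1; apply ln_increasing; lra). nra.
Qed.

Lemma rate_le_tangent c y t x : 0 < c -> 0 <= y -> 0 <= t -> 0 < x ->
  rate c y t <= (t * fx x + c * y) / (x * ln 2).
Proof.
  intros Hc Hy Ht Hx. pose proof ln_lt_2 as Hln2.
  assert (Hcy : 0 <= c * y) by nra.
  assert (Hden : 0 < x * ln 2) by nra.
  unfold rate. destruct (Req_EM_T t 0) as [_|Ht0].
  { pose proof (fx_nonneg x Hx). apply Rdiv_le_0_compat; nra. }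
  assert (Htp : 0 < t) by lra.
  assert (Hratio : 0 <= c * y / t) by (apply Rdiv_le_0_compat; lra).
  assert (H : t * ln (1 + c * y / t) <= (t * fx x + c * y) / x).
  { apply Rle_trans with (t * (ln x + (1 + c * y / t - x) / x)).
    - apply Rmult_le_compat_l; [lra | apply ln_le_tangent; lra].
    - right. unfold fx. field. lra. }
  unfold log2.
  replace (t * (ln (1 + c * y / t) / ln 2)) with (t * ln (1 + c * y / t) * / ln 2) by (field; lra).
  replace ((t * fx x + c * y) / (x * ln 2)) with ((t * fx x + c * y) / x * / ln 2) by (field; lra).
  apply Rmult_le_compat_r; [left; apply Rinv_0_lt_compat; lra | exact H].
Qed.

Lemma rate_on_ray c k x : rate c (k * (x - 1)) (c * k) = c * k * log2 x.
Proof.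
  unfold rate. destruct (Req_EM_T (c * k) 0) as [->|H]; [ring|].
  assert (c <> 0 /\ k <> 0) as [Hc Hk] by (split; intros E; apply H; rewrite E; ring).
  replace (1 + c * (k * (x - 1)) / (c * k)) with x by (field; auto).
  reflexivity.
Qed.

Lemma gam_pos PB Gam s2 (eta h1 g1 : nat -> R) i :
  0 < PB -> 0 < Gam -> 0 < s2 -> 0 < eta i -> 0 < h1 i -> 0 < g1 i ->
  0 < gam PB Gam s2 eta h1 g1 i.
Proof.
  intros. unfold gam.
  apply Rdiv_lt_0_compat; repeat apply Rmult_lt_0_compat; assumption.
Qed.

Lemma theta_pos Gam s2 (g2 : nat -> R) j :
  0 < Gam -> 0 < s2 -> 0 < g2 j -> 0 < theta Gam s2 g2 j.
Proof. intros. unfold theta. apply Rdiv_lt_0_compat; [|apply Rmult_lt_0_compat]; assumption. Qed.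

Lemma acoef_pos M PB (eta h1 : nat -> R) : (1 <= M)%nat -> 0 < PB ->
  (forall i, (i < M)%nat -> 0 < eta i) -> (forall i, (i < M)%nat -> 0 < h1 i) ->
  0 < acoef M PB eta h1.
Proof.
  intros HM HPB Heta Hh1. apply rsum_pos; [assumption|].
  intros i Hi. repeat apply Rmult_lt_0_compat; auto.
Qed.

Section P4.

Variables (M N : nat) (PB Gam s2 Emax : R) (eta h1 g1 g2 : nat -> R).

Local Notation gm := (gam PB Gam s2 eta h1 g1).
Local Notation th := (theta Gam s2 g2).
Local Notation A1 := (rsum M gm).
Local Notation A2 := (rsum N th).
Local Notation a := (acoef M PB eta h1).
Local Notation Nr := (INR N).
Local Notation feas := (P4feas M N PB Emax eta h1).
Local Notation obj := (P4obj M N PB Gam s2 eta h1 g1 g2).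
Local Notation opt := (P4opt M N PB Gam s2 Emax eta h1 g1 g2).

Lemma P4feas_ext t0 t1 t1' t2 t2' E :
  (forall i, (i < M)%nat -> t1 i = t1' i) -> (forall j, (j < N)%nat -> t2 j = t2' j) ->
  feas t0 t1' t2' E -> feas t0 t1 t2 E.
Proof.
  intros H1 H2 (Ht0 & Ht1 & Ht2 & HE & Htime & Henergy).
  unfold P4feas. rewrite (rsum_ext M t1 t1'), (rsum_ext N t2 t2') by assumption.
  repeat split; try assumption.
  - intros i Hi. rewrite H1 by assumption. auto.
  - intros j Hj. rewrite H2 by assumption. auto.
Qed.

Lemma P4obj_ext t0 t1 t1' t2 t2' E :
  (forall i, (i < M)%nat -> t1 i = t1' i) -> (forall j, (j < N)%nat -> t2 j = t2' j) ->
  obj t0 t1 t2 E = obj t0 t1' t2' E.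
Proof.
  intros H1 H2. unfold P4obj.
  f_equal; apply rsum_ext; intros k Hk; [rewrite H1 | rewrite H2]; auto.
Qed.

Lemma P4opt_ext t0 t0' t1 t1' t2 t2' E E' :
  opt t0' t1' t2' E' -> t0 = t0' -> E = E' ->
  (forall i, (i < M)%nat -> t1 i = t1' i) -> (forall j, (j < N)%nat -> t2 j = t2' j) ->
  opt t0 t1 t2 E.
Proof.
  intros [Hfeas Hmax] -> -> H1 H2. split.
  - exact (P4feas_ext _ _ _ _ _ _ H1 H2 Hfeas).
  - intros u0 u1 u2 F HF. rewrite (P4obj_ext _ _ _ _ _ _ H1 H2). auto.
Qed.

Lemma P4obj_ray k1 k2 x :
  obj (k1 * (x - 1)) (fun i => gm i * k1) (fun j => th j * k2) (k2 * (x - 1))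
  = (A1 * k1 + A2 * k2) * log2 x.
Proof.
  unfold P4obj.
  rewrite (rsum_ext M _ (fun i => gm i * (k1 * log2 x))) by (intros; rewrite rate_on_ray; ring).
  rewrite (rsum_ext N _ (fun j => th j * (k2 * log2 x))) by (intros; rewrite rate_on_ray; ring).
  rewrite !rsum_scal. ring.
Qed.

Hypothesis hgam : forall i, (i < M)%nat -> 0 < gm i.
Hypothesis htheta : forall j, (j < N)%nat -> 0 < th j.

(* The two conditions on [nu] are dual feasibility of the certificate for [tau_0]
   and for [E]. *)
Lemma P4obj_le_dual x nu t0 t1 t2 E : 0 < x -> 0 <= nu ->
  A1 - a * nu <= fx x -> A2 <= Nr * nu -> feas t0 t1 t2 E ->
  obj t0 t1 t2 E <= (fx x + nu * Emax) / (x * ln 2).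
Proof.
  intros Hx Hnu Hdual1 Hdual2 (Ht0 & Ht1 & Ht2 & HE & Htime & Henergy).
  pose proof ln_lt_2 as Hln2. pose proof (fx_nonneg x Hx) as Hfx.
  assert (Hq : 0 < x * ln 2) by nra.
  assert (Htangent : obj t0 t1 t2 E
            <= (fx x * (rsum M t1 + rsum N t2) + A1 * t0 + A2 * E) / (x * ln 2)).
  { apply Rle_trans with
      (rsum M (fun i => t1 i * (fx x / (x * ln 2)) + gm i * (t0 / (x * ln 2)))
       + rsum N (fun j => t2 j * (fx x / (x * ln 2)) + th j * (E / (x * ln 2)))).
    - apply Rplus_le_compat; apply rsum_le; intros k Hk.
      + apply Rle_trans with ((t1 k * fx x + gm k * t0) / (x * ln 2));
          [apply rate_le_tangent; auto | right; field; lra].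
      + apply Rle_trans with ((t2 k * fx x + th k * E) / (x * ln 2));
          [apply rate_le_tangent; auto | right; field; lra].
    - right. rewrite !rsum_plus, !rsum_scal. field. lra. }
  assert (Hprices : fx x * (rsum M t1 + rsum N t2) + A1 * t0 + A2 * E <= fx x + nu * Emax).
  { assert (0 <= rsum M t1) by (apply rsum_nonneg; assumption).
    assert (0 <= rsum N t2) by (apply rsum_nonneg; assumption).
    assert (A1 * t0 <= (fx x + a * nu) * t0) by (apply Rmult_le_compat_r; lra).
    assert (A2 * E <= Nr * nu * E) by (apply Rmult_le_compat_r; lra).
    assert (nu * (a * t0 + Nr * E) <= nu * Emax) by (apply Rmult_le_compat_l; lra).
    nra. }
  eapply Rle_trans; [exact Htangent|].
  unfold Rdiv. apply Rmult_le_compat_r; [left; apply Rinv_0_lt_compat|]; lra.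
Qed.

Lemma P4feas_ray k1 k2 x : 0 <= k1 -> 0 <= k2 -> 1 <= x ->
  k1 * (x - 1 + A1) + k2 * A2 <= 1 -> (a * k1 + Nr * k2) * (x - 1) <= Emax ->
  feas (k1 * (x - 1)) (fun i => gm i * k1) (fun j => th j * k2) (k2 * (x - 1)).
Proof.
  intros Hk1 Hk2 Hx Htime Henergy. unfold P4feas. rewrite !rsum_scal.
  repeat split; try nra.
  - intros i Hi. pose proof (hgam i Hi). nra.
  - intros j Hj. pose proof (htheta j Hj). nra.
Qed.

Lemma P4opt_ray k1 k2 x nu : 0 <= k1 -> 0 <= k2 -> 1 <= x -> 0 <= nu ->
  k1 * (x - 1 + A1) + k2 * A2 <= 1 -> (a * k1 + Nr * k2) * (x - 1) <= Emax ->
  A1 - a * nu <= fx x -> A2 <= Nr * nu ->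
  fx x + nu * Emax = (A1 * k1 + A2 * k2) * (x * ln x) ->
  opt (k1 * (x - 1)) (fun i => gm i * k1) (fun j => th j * k2) (k2 * (x - 1)).
Proof.
  intros Hk1 Hk2 Hx Hnu Htime Henergy Hdual1 Hdual2 Hvalue. split.
  - apply P4feas_ray; assumption.
  - intros t0 t1 t2 E HF. pose proof ln_lt_2.
    rewrite P4obj_ray.
    eapply Rle_trans; [apply (P4obj_le_dual x nu); (assumption || lra)|].
    right. rewrite Hvalue. unfold log2. field. lra.
Qed.

Hypothesis hM : (1 <= M)%nat.
Hypothesis hN : (1 <= N)%nat.
Hypothesis ha : 0 < a.
Hypothesis hEmax : 0 < Emax.

Let A1_pos : 0 < A1. Proof. exact (rsum_pos M gm hM hgam). Qed.
Let A2_pos : 0 < A2. Proof. exact (rsum_pos N th hN htheta). Qed.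
Let Nr_pos : 0 < Nr. Proof. apply lt_0_INR. lia. Qed.

Lemma P4opt_group2_idle : Emax < a ->
  fx (1 + A1 * Emax / (a - Emax)) <= A1 - a / Nr * A2 ->
  opt (Emax / a) (fun i => gm i / A1 * (1 - Emax / a)) (fun _ => 0) 0.
Proof.
  intros HEa Hfx.
  assert (Hw : 0 <= A1 * Emax / (a - Emax)) by (apply Rdiv_le_0_compat; nra).
  assert (HaA2 : 0 < a / Nr * A2) by (apply Rmult_lt_0_compat; [apply Rdiv_lt_0_compat|]; lra).
  set (x := 1 + A1 * Emax / (a - Emax)) in *.
  set (k1 := (a - Emax) / (a * A1)).
  set (nu := (A1 - fx x) / a).
  eapply P4opt_ext.
  - apply (P4opt_ray k1 0 x nu).
    + apply Rdiv_le_0_compat; nra.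
    + lra.
    + unfold x; lra.
    + apply Rdiv_le_0_compat; lra.
    + right. unfold k1, x. field. lra.
    + right. unfold k1, x. field. lra.
    + right. unfold nu. field. lra.
    + replace (Nr * nu) with (A2 + Nr / a * (A1 - a / Nr * A2 - fx x)) by (unfold nu; field; lra).
      assert (0 <= Nr / a * (A1 - a / Nr * A2 - fx x))
        by (apply Rmult_le_pos; [apply Rdiv_le_0_compat|]; lra).
      lra.
    + unfold nu, k1, x, fx. set (l := ln _). field. lra.
  - unfold k1, x. field. lra.
  - ring.
  - intros i _. unfold k1. field. lra.
  - intros j _. cbv beta. ring.
Qed.

(* Under [Emax <= L] both the min and the max of case (i) are attained by their
   second argument; [x*] only enters through [x1* <= x*]. *)
Lemma P4opt_case_i xs x1s : 1 < xs -> fx xs = A1 -> 1 < x1s -> fx x1s = A1 - a / Nr * A2 ->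
  Emax <= a * (x1s - 1) / (A1 + x1s - 1) ->
  opt (Rmin ((xs - 1) / (A1 + xs - 1)) (Emax / a))
      (fun i => Rmax (gm i / (A1 + xs - 1)) (gm i / A1 * (1 - Emax / a)))
      (fun _ => 0) 0.
Proof.
  intros Hxs Hfxs Hx1s Hfx1s HL.
  assert (HaA2 : 0 < a / Nr * A2) by (apply Rmult_lt_0_compat; [apply Rdiv_lt_0_compat|]; lra).
  assert (HL' : Emax * (A1 + x1s - 1) <= a * (x1s - 1)).
  { apply (Rmult_le_compat_r (A1 + x1s - 1)) in HL; [|lra].
    replace (a * (x1s - 1) / (A1 + x1s - 1) * (A1 + x1s - 1)) with (a * (x1s - 1)) in HL
      by (field; lra).
    exact HL. }
  assert (HEa : Emax < a) by nra.
  assert (Hx1xs : x1s <= xs).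
  { destruct (Rle_or_lt x1s xs) as [|Hlt]; [assumption|].
    pose proof (fx_lt_increasing xs x1s Hxs Hlt). lra. }
  assert (HLxs : Emax * (A1 + xs - 1) <= a * (xs - 1)) by nra.
  rewrite Rmin_right.
  2:{ apply (Rmult_le_reg_r (a * (A1 + xs - 1))); [nra|].
      replace ((xs - 1) / (A1 + xs - 1) * (a * (A1 + xs - 1))) with (a * (xs - 1)) by (field; lra).
      replace (Emax / a * (a * (A1 + xs - 1))) with (Emax * (A1 + xs - 1)) by (field; lra).
      exact HLxs. }
  eapply P4opt_ext; [apply P4opt_group2_idle | reflexivity | reflexivity | | ].
  - exact HEa.
  - rewrite <- Hfx1s. apply fx_le_increasing.
    + assert (0 <= A1 * Emax / (a - Emax)) by (apply Rdiv_le_0_compat; nra). lra.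
    + apply (Rmult_le_reg_r (a - Emax)); [lra|].
      replace ((1 + A1 * Emax / (a - Emax)) * (a - Emax)) with (a - Emax + A1 * Emax)
        by (field; lra).
      nra.
  - intros i Hi. pose proof (hgam i Hi). apply Rmax_right.
    apply (Rmult_le_reg_r (a * A1 * (A1 + xs - 1))); [repeat apply Rmult_lt_0_compat; lra|].
    replace (gm i / (A1 + xs - 1) * (a * A1 * (A1 + xs - 1))) with (gm i * (a * A1))
      by (field; lra).
    replace (gm i / A1 * (1 - Emax / a) * (a * A1 * (A1 + xs - 1)))
      with (gm i * ((a - Emax) * (A1 + xs - 1))) by (field; lra).
    apply Rmult_le_compat_l; nra.
  - intros j _. reflexivity.
Qed.

Lemma P4opt_interior x1s : 1 < x1s -> fx x1s = A1 - a / Nr * A2 ->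
  a * (x1s - 1) / (A1 + x1s - 1) <= Emax -> Emax <= Nr / A2 * (x1s - 1) ->
  let D := Nr * (x1s - 1 + A1) - a * A2 in
  opt ((Nr * (x1s - 1) - Emax * A2) / D)
      (fun i => gm i * (Nr * (x1s - 1) - Emax * A2) / ((x1s - 1) * D))
      (fun j => th j * (Emax * (x1s - 1 + A1) - a * (x1s - 1)) / ((x1s - 1) * D))
      ((Emax * (x1s - 1 + A1) - a * (x1s - 1)) / D).
Proof.
  intros Hx1s Hfx HL HU D.
  set (P := Nr * (x1s - 1) - Emax * A2).
  set (K := Emax * (x1s - 1 + A1) - a * (x1s - 1)).
  assert (Htime : P * (x1s - 1 + A1) + K * A2 = (x1s - 1) * D) by (unfold P, K, D; ring).
  assert (Henergy : a * P + Nr * K = Emax * D) by (unfold P, K, D; ring).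
  assert (HD : D = Nr * (x1s - 1 + fx x1s)) by (unfold D; rewrite Hfx; field; lra).
  assert (HP : 0 <= P).
  { apply (Rmult_le_compat_r A2) in HU; [|lra].
    replace (Nr / A2 * (x1s - 1) * A2) with (Nr * (x1s - 1)) in HU by (field; lra).
    unfold P. lra. }
  assert (HK : 0 <= K).
  { apply (Rmult_le_compat_r (A1 + x1s - 1)) in HL; [|lra].
    replace (a * (x1s - 1) / (A1 + x1s - 1) * (A1 + x1s - 1)) with (a * (x1s - 1)) in HL
      by (field; lra).
    unfold K. lra. }
  assert (HPdef : P = Nr * (x1s - 1) - Emax * A2) by reflexivity.
  clearbody D P K.
  assert (HDpos : 0 < D) by (rewrite HD; pose proof (fx_nonneg x1s ltac:(lra)); nra).
  assert (Hxl : x1s * ln x1s = x1s - 1 + fx x1s) by (unfold fx; ring).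
  eapply P4opt_ext.
  - apply (P4opt_ray (P / ((x1s - 1) * D)) (K / ((x1s - 1) * D)) x1s (A2 / Nr)).
    + apply Rdiv_le_0_compat; nra.
    + apply Rdiv_le_0_compat; nra.
    + lra.
    + apply Rdiv_le_0_compat; lra.
    + right. replace (P / ((x1s - 1) * D) * (x1s - 1 + A1) + K / ((x1s - 1) * D) * A2)
        with ((P * (x1s - 1 + A1) + K * A2) / ((x1s - 1) * D)) by (field; split; lra).
      rewrite Htime. field. split; lra.
    + right. replace ((a * (P / ((x1s - 1) * D)) + Nr * (K / ((x1s - 1) * D))) * (x1s - 1))
        with ((a * P + Nr * K) / D) by (field; split; lra).
      rewrite Henergy. field. lra.
    + right. rewrite Hfx. field. lra.
    + right. field. lra.
    + assert (Hshare : A1 * P + A2 * K = (x1s - 1) * (D - P)).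
      { transitivity (P * (x1s - 1 + A1) + K * A2 - (x1s - 1) * P); [ring|].
        rewrite Htime. ring. }
      replace (A1 * (P / ((x1s - 1) * D)) + A2 * (K / ((x1s - 1) * D)))
        with ((A1 * P + A2 * K) / ((x1s - 1) * D)) by (field; split; lra).
      rewrite Hshare, Hxl.
      replace (x1s - 1 + fx x1s) with (D / Nr) by (rewrite HD; field; lra).
      replace ((x1s - 1) * (D - P) / ((x1s - 1) * D) * (D / Nr)) with ((D - P) / Nr)
        by (field; split; lra).
      rewrite HD, HPdef, Hfx. field. lra.
  - field. split; lra.
  - field. split; lra.
  - intros i _. cbv beta. field. split; lra.
  - intros j _. cbv beta. field. split; lra.
Qed.

Lemma P4opt_group1_idle : A1 - a / Nr * A2 <= fx (1 + A2 * Emax / Nr) ->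
  opt 0 (fun _ => 0) (fun j => th j / A2) (Emax / Nr).
Proof.
  intros Hfx.
  assert (Hu : 0 <= A2 * Emax / Nr) by (apply Rdiv_le_0_compat; nra).
  set (x := 1 + A2 * Emax / Nr) in *.
  eapply P4opt_ext.
  - apply (P4opt_ray 0 (1 / A2) x (A2 / Nr)).
    + lra.
    + apply Rdiv_le_0_compat; lra.
    + unfold x; lra.
    + apply Rdiv_le_0_compat; lra.
    + right. field. lra.
    + right. unfold x. field. split; lra.
    + replace (a * (A2 / Nr)) with (a / Nr * A2) by (field; lra). exact Hfx.
    + right. field. lra.
    + unfold x, fx. set (l := ln _). field. split; lra.
  - ring.
  - unfold x. field. split; lra.
  - intros i _. cbv beta. ring.
  - intros j _. cbv beta. field. lra.
Qed.

Lemma P4opt_case_iii x1s :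
  (1 < x1s /\ fx x1s = A1 - a / Nr * A2 /\ Nr / A2 * (x1s - 1) <= Emax) \/ A1 < a / Nr * A2 ->
  opt 0 (fun _ => 0) (fun j => th j / A2) (Emax / Nr).
Proof.
  intros Hcase. apply P4opt_group1_idle.
  destruct Hcase as [(Hx1s & Hfx & HU) | Hlt].
  - rewrite <- Hfx. apply fx_le_increasing; [lra|].
    apply (Rmult_le_compat_r (A2 / Nr)) in HU; [|apply Rdiv_le_0_compat; lra].
    replace (Nr / A2 * (x1s - 1) * (A2 / Nr)) with (x1s - 1) in HU by (field; lra).
    replace (Emax * (A2 / Nr)) with (A2 * Emax / Nr) in HU by (field; lra).
    lra.
  - assert (0 <= fx (1 + A2 * Emax / Nr)).
    { apply fx_nonneg. assert (0 <= A2 * Emax / Nr) by (apply Rdiv_le_0_compat; nra). lra. }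
    lra.
Qed.

End P4.

Theorem theorem4 (M N : nat) (PB Gam s2 Emax : R) (eta h1 g1 g2 : nat -> R)
  (hM : (1 <= M)%nat) (hN : (1 <= N)%nat)
  (hPB : 0 < PB) (hGam : 0 < Gam) (hs2 : 0 < s2) (hE : 0 < Emax)
  (heta : forall i, (i < M)%nat -> 0 < eta i < 1)
  (hh1 : forall i, (i < M)%nat -> 0 < h1 i)
  (hg1 : forall i, (i < M)%nat -> 0 < g1 i)
  (hg2 : forall j, (j < N)%nat -> 0 < g2 j) :
  let A1 := rsum M (gam PB Gam s2 eta h1 g1) in
  let A2 := rsum N (theta Gam s2 g2) in
  let a := acoef M PB eta h1 in
  let Nr := INR N in
  forall xs x1s : R,
  1 < xs -> fx xs = A1 ->
  let L := a * (x1s - 1) / (A1 + x1s - 1) in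
  let U := Nr / A2 * (x1s - 1) in
  let D := Nr * (x1s - 1 + A1) - a * A2 in
  let Hx1 := (a / Nr * A2 <= A1 /\ 1 < x1s /\ fx x1s = A1 - a / Nr * A2) in
  (* case (i) *)
  (Hx1 -> Emax <= L ->
     P4opt M N PB Gam s2 Emax eta h1 g1 g2
       (Rmin ((xs - 1) / (A1 + xs - 1)) (Emax / a))
       (fun i => Rmax (gam PB Gam s2 eta h1 g1 i / (A1 + xs - 1))
                      (gam PB Gam s2 eta h1 g1 i / A1 * (1 - Emax / a)))
       (fun _ => 0) 0)
  /\
  (* case (ii) *)
  (Hx1 -> L <= Emax -> Emax <= U ->
     P4opt M N PB Gam s2 Emax eta h1 g1 g2
       ((Nr * (x1s - 1) - Emax * A2) / D)
       (fun i => gam PB Gam s2 eta h1 g1 i * (Nr * (x1s - 1) - Emax * A2)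
                 / ((x1s - 1) * D))
       (fun j => theta Gam s2 g2 j * (Emax * (x1s - 1 + A1) - a * (x1s - 1))
                 / ((x1s - 1) * D))
       ((Emax * (x1s - 1 + A1) - a * (x1s - 1)) / D))
  /\
  (* case (iii) *)
  ((Hx1 /\ U <= Emax) \/ A1 < a / Nr * A2 ->
     P4opt M N PB Gam s2 Emax eta h1 g1 g2
       0 (fun _ => 0) (fun j => theta Gam s2 g2 j / A2) (Emax / Nr)).
Proof.
  intros A1 A2 a Nr xs x1s Hxs Hfxs L U D Hx1.
  assert (hgam : forall i, (i < M)%nat -> 0 < gam PB Gam s2 eta h1 g1 i)
    by (intros i Hi; destruct (heta i Hi); apply gam_pos; auto).
  assert (htheta : forall j, (j < N)%nat -> 0 < theta Gam s2 g2 j)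
    by (intros j Hj; apply theta_pos; auto).
  assert (ha : 0 < a) by (apply acoef_pos; auto; intros i Hi; apply (heta i Hi)).
  split; [|split].
  - intros (_ & Hx1s & Hfx1s) HL. eapply P4opt_case_i; eassumption.
  - intros (_ & Hx1s & Hfx1s) HL HU. eapply P4opt_interior; eassumption.
  - intros Hcase. apply P4opt_case_iii with (x1s := x1s); try assumption.
    destruct Hcase as [((_ & Hx1s & Hfx1s) & HU) | Hlt]; [left | right]; auto.
Qed.
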